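(* Let $k$ be a commutative artin ring, let $\Lambda$ be an artin $k$-algebra, and let $M$ and $N$ be finite length (left) $\Lambda$-modules. Let $M'\subseteq M$ be a submodule. (1) If $M\leq_{\mathrm{deg}}N$, then there exists a submodule $N'\subseteq N$ such that $M'\leq_{\mathrm{deg}}N'$. (2) If $M\leq_{\mathrm{vdeg}}N$, then there exists a submodule $N'\subseteq N$ such that $M'\leq_{\mathrm{vdeg}}N'$.
   Context: For finite length $\Lambda$-modules $M,N$, one writes $M\leq_{\mathrm{deg}}N$ ($M$ degenerates to $N$) if there exist a finite length $\Lambda$-module $X$ and a short exact sequence of $\Lambda$-modules $0\to X\to M\oplus X\to N\to 0$. One writes $M\leq_{\mathrm{vdeg}}N$ ($M$ virtually degenerates to $N$) if there exists a finite length $\Lambda$-module $Y$ with $Y\oplus M\leq_{\mathrm{deg}}Y\oplus N$. *)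

From mathcomp Require Import all_boot all_algebra.
Set Implicit Arguments. Unset Strict Implicit. Unset Printing Implicit Defensive.
Import GRing.Theory.
Local Open Scope ring_scope.

Definition is_ideal (k : comPzRingType) (I : k -> Prop) : Prop :=
  I 0 /\ (forall x y, I x -> I y -> I (x - y)) /\ (forall a x, I x -> I (a * x)).

Definition artinian_ring (k : comPzRingType) : Prop :=
  forall I : nat -> k -> Prop,
    (forall n, is_ideal (I n)) ->
    (forall n x, I n.+1 x -> I n x) ->
    exists n, forall m, (n <= m)%N -> forall x, I m x <-> I n x.

Definition artin_algebra (k : comPzRingType) (L : algType k) : Prop :=
  artinian_ring k /\
  exists s : seq L, forall x : L,
    exists c : 'I_(size s) -> k, x = \sum_(i < size s) c i *: s`_i.

Definition is_submodule (R : pzRingType) (M : lmodType R) (S : M -> Prop) : Prop :=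
  S 0 /\ (forall x y, S x -> S y -> S (x - y)) /\ (forall a x, S x -> S (a *: x)).

Definition finite_length (R : pzRingType) (M : lmodType R) : Prop :=
  exists n : nat, forall (m : nat) (S : nat -> M -> Prop),
    (forall i, is_submodule (S i)) ->
    (forall i, (i < m)%N ->
       (forall x, S i x -> S i.+1 x) /\ exists x, S i.+1 x /\ ~ S i x) ->
    (m <= n)%N.

Definition short_exact (R : pzRingType) (A B C : lmodType R)
  (f : {linear A -> B}) (g : {linear B -> C}) : Prop :=
  injective f /\ (forall c, exists b, g b = c) /\
  (forall b, g b = 0 <-> exists a, b = f a).

Definition deg_le (R : pzRingType) (M N : lmodType R) : Prop :=
  exists (X : lmodType R), finite_length X /\
  exists (f : {linear X -> (M * X)%type}) (g : {linear (M * X)%type -> N}),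
    short_exact f g.

Definition vdeg_le (R : pzRingType) (M N : lmodType R) : Prop :=
  exists (Y : lmodType R), finite_length Y /\ deg_le (Y * M)%type (Y * N)%type.

Definition submodule_of (R : pzRingType) (N' N : lmodType R) : Prop :=
  exists i : {linear N' -> N}, injective i.

(* Let [0 -> X -f-> M (+) X -g-> N -> 0] be exact. The largest submodule [W] of
   [X] with [f W <= M' (+) W] restricts it to [0 -> W -> M' (+) W -> g (M' (+) W) -> 0]:
   exactness in the middle holds because [f x \in M' (+) W] already forces [x \in W].
   For [Y (+) M <=deg Y (+) N] the same restriction is applied to [P (+) M'], where
   [P <= Y] is a fixed point of [P |-> Y-component of the image g ((P (+) M') (+) W)];
   it exists since iterating from [0] gives an ascending chain in the finite length
   module [Y]. The image then maps onto [P] with kernel [U <= N], and a degeneration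
   to an extension of [U] by [P] yields one to [P (+) U], so [P (+) M' <=deg P (+) U]. *)

From HB Require Import structures.
From mathcomp Require Import all_boot all_algebra.
From mathcomp Require Import boolp.
From Stdlib Require Import ClassicalEpsilon.
Set Implicit Arguments. Unset Strict Implicit. Unset Printing Implicit Defensive.
Import GRing.Theory.
Local Open Scope ring_scope.

Definition mkLinear (R : pzRingType) (A B : lmodType R) (h : A -> B)
  (hP : forall a u v, h (a *: u + v) = a *: h u + h v) : {linear A -> B} :=
  HB.pack h (GRing.isLinear.Build R A B *:%R h hP).

Section SubmodulePredicates.
Variables (R : pzRingType) (A B : lmodType R).

Lemma is_submodule0 : is_submodule (fun a : A => a = 0).
Proof.
split=> //; split=> [x y -> ->|a x ->]; [exact: subr0 | exact: scaler0].
Qed.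

Lemma is_submodule_image (h : {linear A -> B}) (P : A -> Prop) :
  is_submodule P -> is_submodule (fun b => exists2 a, P a & h a = b).
Proof.
move=> [P0 [PB PZ]]; split; first by exists 0; rewrite ?linear0.
split=> [_ _ [a Pa <-] [b Pb <-]|r _ [a Pa <-]].
  by exists (a - b); rewrite ?linearB //; apply: PB.
by exists (r *: a); rewrite ?linearZ //; apply: PZ.
Qed.

Lemma is_submodule_range (h : {linear A -> B}) :
  is_submodule (fun b => exists a, h a = b).
Proof.
split; first by exists 0; rewrite linear0.
split=> [_ _ [a <-] [b <-]|r _ [a <-]].
  by exists (a - b); rewrite linearB.
by exists (r *: a); rewrite linearZ.
Qed.

Lemma is_submodule_preimage (h : {linear A -> B}) (P : B -> Prop) :
  is_submodule P -> is_submodule (fun a => P (h a)).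
Proof.
move=> [P0 [PB PZ]]; split; first by rewrite linear0.
split=> [x y Px Py|r x Px]; [rewrite linearB; exact: PB | rewrite linearZ; exact: PZ].
Qed.

Lemma is_submodule_prod (P : A -> Prop) (Q : B -> Prop) :
  is_submodule P -> is_submodule Q -> is_submodule (fun s : A * B => P s.1 /\ Q s.2).
Proof.
move=> [P0 [PB PZ]] [Q0 [QB QZ]]; split=> //.
split=> [x y [Px Qx] [Py Qy]|r x [Px Qx]]; split.
- exact: PB.
- exact: QB.
- exact: PZ.
- exact: QZ.
Qed.

Lemma is_submodule_bigcap (I : Type) (P : I -> A -> Prop) :
  (forall i, is_submodule (P i)) -> is_submodule (fun a => forall i, P i a).
Proof.
move=> HP; split=> [i|]; first by case: (HP i).
by split=> [x y Px Py i|r x Px i]; have [_ [PB PZ]] := HP i; [apply: PB | apply: PZ].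
Qed.

End SubmodulePredicates.

Record submod (R : pzRingType) (V : lmodType R) := Submod {
  submod_pred :> V -> Prop; submod_is_submodule : is_submodule submod_pred }.

Section SubmoduleType.
Variables (R : pzRingType) (V : lmodType R) (S : submod V).

Definition submod_mem : {pred V} := fun x => `[< S x >].

Lemma submod_mem_closed : GRing.submod_closed submod_mem.
Proof.
have [S0 [SB SZ]] := submod_is_submodule S.
split; first exact/asboolP.
move=> a u v /asboolP Su /asboolP Sv; apply/asboolP.
rewrite -[v]opprK -[- v]sub0r; exact: SB (SZ _ _ Su) (SB _ _ S0 Sv).
Qed.

HB.instance Definition _ := GRing.isSubmodClosed.Build R V submod_mem submod_mem_closed.
Record subm := Subm { subm_val : V; subm_valP : subm_val \in submod_mem }.
HB.instance Definition _ := [isSub for subm_val].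
HB.instance Definition _ := [Choice of subm by <:].
HB.instance Definition _ := [SubChoice_isSubLmodule of subm by <:].

Lemma subm_in (x : subm) : S (val x).
Proof. exact/asboolP/subm_valP. Qed.

Definition subm_of (x : V) (Sx : S x) : subm := Subm (introT (asboolP _) Sx).

Lemma submodule_of_subm : submodule_of subm V.
Proof. by exists val; apply: val_inj. Qed.

End SubmoduleType.
Arguments subm_of {R V} S {x}.

Section FiniteLength.
Variable R : pzRingType.

Definition length_bounded (A : lmodType R) (n : nat) : Prop :=
  forall (m : nat) (S : nat -> A -> Prop),
    (forall i, is_submodule (S i)) ->
    (forall i, (i < m)%N ->
       (forall x, S i x -> S i.+1 x) /\ exists x, S i.+1 x /\ ~ S i x) ->
    (m <= n)%N.

Lemma finite_length_inj (A B : lmodType R) (h : {linear A -> B}) :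
  injective h -> finite_length B -> finite_length A.
Proof.
move=> h_inj [n Hn]; exists n => m S HS Hch.
apply: (Hn m (fun i b => exists2 a, S i a & h a = b)) => [i|i lt_im].
  exact: is_submodule_image.
have [S_sub [x [Sx Snx]]] := Hch i lt_im; split.
  by move=> _ [a Sa <-]; exists a => //; apply: S_sub.
by exists (h x); split=> [|[a Sa /h_inj eq_ax]]; [exists x | apply: Snx; rewrite -eq_ax].
Qed.

Lemma finite_length_subm (V : lmodType R) (S : submod V) :
  finite_length V -> finite_length (subm S).
Proof. exact: finite_length_inj val_inj. Qed.

Lemma chain_le (T : Type) (C : nat -> T -> Prop) (m : nat) :
  (forall i, (i < m)%N -> forall x, C i x -> C i.+1 x) ->
  forall p q, (p <= q <= m)%N -> forall x, C p x -> C q x.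
Proof.
move=> C_mono p; elim=> [|q IHq] /andP[le_pq le_qm] x Cpx.
  by move: le_pq; rewrite leqn0 => /eqP <-.
move: le_pq; rewrite leq_eqVlt => /orP[/eqP <- //|lt_pq].
by apply: C_mono => //; apply: IHq; rewrite // -ltnS lt_pq ltnW.
Qed.

Definition strict_step (T : Type) (C : nat -> T -> Prop) (i : nat) : bool :=
  `[< exists x, C i.+1 x /\ ~ C i x >].

(* The strict steps of a non-strict chain form a strict chain on their own. *)
Lemma count_strict_step (A : lmodType R) (n m : nat) (C : nat -> A -> Prop) :
  length_bounded A n -> (forall i, is_submodule (C i)) ->
  (forall i, (i < m)%N -> forall x, C i x -> C i.+1 x) ->
  (count (strict_step C) (iota 0 m) <= n)%N.
Proof.
move=> Hn HC C_mono; rewrite -size_filter.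
set idx := filter _ _.
have idx_sorted : sorted ltn idx.
  by apply: sorted_filter; [exact: ltn_trans | exact: iota_ltn_sorted].
have idx_mem j : (j < size idx)%N -> (nth m idx j < m)%N /\ strict_step C (nth m idx j).
  move=> lt_j; have := mem_nth m lt_j; rewrite mem_filter mem_iota add0n.
  by case/andP=> -> /andP[_ ->].
have idx_next j : (j < size idx)%N -> (nth m idx j < nth m idx j.+1 <= m)%N.
  move=> lt_j; case: (ltnP j.+1 (size idx)) => [lt_j1|le_j1].
    rewrite (sorted_ltn_nth ltn_trans) ?inE //=.
    by apply: ltnW; case: (idx_mem _ lt_j1).
  by rewrite (nth_default m le_j1) leqnn andbT; case: (idx_mem _ lt_j).
apply: (Hn _ (fun j => C (nth m idx j))) => // j lt_j.
have [_ /asboolP[x [Cx Cnx]]] := idx_mem j lt_j.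
have C_up y : C (nth m idx j).+1 y -> C (nth m idx j.+1) y.
  by apply: (chain_le C_mono); case/andP: (idx_next j lt_j) => -> ->.
have [lt_jm _] := idx_mem j lt_j.
split=> [y Cy|]; first by apply: C_up; apply: C_mono.
by exists x; split=> //; apply: C_up.
Qed.

Lemma strict_step_prod (A B : lmodType R) (S : nat -> A * B -> Prop) (i : nat) :
  is_submodule (S i) -> is_submodule (S i.+1) -> (forall s, S i s -> S i.+1 s) ->
  (exists s, S i.+1 s /\ ~ S i s) ->
  strict_step (fun j x => S j (x, 0)) i || strict_step (fun j y => exists2 s, S j s & s.2 = y) i.
Proof.
move=> [S0 [SB _]] [_ [S'B _]] S_sub [[x y] [Sxy Snxy]].
have [[[x' y'] Sx'y /= eq_y']|Nb] := pselect (exists2 s, S i s & s.2 = y); last first.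
  by apply/orP; right; apply/asboolP; exists y; split=> //; exists (x, y).
rewrite {y'}eq_y' in Sx'y; apply/orP; left; apply/asboolP; exists (x - x'); split.
  have -> : (x - x', 0) = (x, y) - (x', y) by congr pair; rewrite subrr.
  exact: S'B Sxy (S_sub _ Sx'y).
move=> Sd; apply: Snxy.
have -> : (x, y) = (x - x', 0) - (0 - (x', y)) by congr pair; rewrite !sub0r !opprK ?subrK ?add0r.
exact: SB Sd (SB _ _ S0 Sx'y).
Qed.

Lemma finite_length_prod (A B : lmodType R) :
  finite_length A -> finite_length B -> finite_length (A * B)%type.
Proof.
move=> [nA HA] [nB HB]; exists (nA + nB)%N => m S HS S_chain.
pose a j x := S j (x, 0 : B).
pose b j y := exists2 s, S j s & s.2 = y.
have inlP r (u v : A) : (r *: u + v, 0 : B) = r *: (u, 0) + (v, 0).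
  by apply: injective_projections => /=; rewrite ?scaler0 ?addr0.
have Ha j : is_submodule (a j) := is_submodule_preimage (mkLinear inlP) (HS j).
have Hb j : is_submodule (b j) := is_submodule_image snd (HS j).
have S_mono j : (j < m)%N -> forall s, S j s -> S j.+1 s.
  by move=> lt_jm; case: (S_chain j lt_jm).
have a_mono j : (j < m)%N -> forall x, a j x -> a j.+1 x.
  by move=> lt_jm x; apply: S_mono.
have b_mono j : (j < m)%N -> forall y, b j y -> b j.+1 y.
  by move=> lt_jm y [s Ss <-]; exists s => //; apply: S_mono.
have strict_ab j : j \in iota 0 m -> strict_step a j || strict_step b j.
  rewrite mem_iota add0n => /= lt_jm.
  by apply: strict_step_prod => //; case: (S_chain j lt_jm).
apply: (@leq_trans (count (predU (strict_step a) (strict_step b)) (iota 0 m))).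
  by rewrite (@eq_in_count _ _ predT) ?count_predT ?size_iota // => j /strict_ab.
apply: leq_trans (leq_add (count_strict_step HA Ha a_mono) (count_strict_step HB Hb b_mono)).
by rewrite -count_predUI leq_addr.
Qed.

Lemma finite_length_stationary (A : lmodType R) (S : nat -> A -> Prop) :
  finite_length A -> (forall k, is_submodule (S k)) -> (forall k x, S k x -> S k.+1 x) ->
  exists k, forall x, S k.+1 x -> S k x.
Proof.
move=> [n Hn] HS S_mono; apply: contrapT => S_strict.
have S_step k : exists x, S k.+1 x /\ ~ S k x.
  apply: contrapT => S_k; apply: S_strict; exists k => x Sx.
  by apply: contrapT => Snx; apply: S_k; exists x.
by have := Hn n.+1 S HS (fun k _ => conj (S_mono k) (S_step k)); rewrite ltnn.
Qed.

End FiniteLength.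

Lemma submodule_fixpoint (R : pzRingType) (Y : lmodType R) (Phi : (Y -> Prop) -> Y -> Prop) :
  finite_length Y ->
  (forall P, is_submodule P -> is_submodule (Phi P)) ->
  (forall P Q, (forall y, P y -> Q y) -> forall y, Phi P y -> Phi Q y) ->
  exists2 P, is_submodule P & forall y, Phi P y <-> P y.
Proof.
move=> FY Phi_sub Phi_mono.
pose S k := iter k Phi (fun y => y = 0).
have HS k : is_submodule (S k).
  by elim: k => [|k IHk]; [exact: is_submodule0 | exact: Phi_sub].
have S_mono k y : S k y -> S k.+1 y.
  elim: k y => [y -> |k IHk]; first by case: (Phi_sub _ (HS 0)).
  exact: Phi_mono.
have [k S_stat] := finite_length_stationary FY HS S_mono.
by exists (S k) => // y; split; [apply: S_stat | apply: S_mono].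
Qed.

Section Submodules.
Variables (R : pzRingType) (A B : lmodType R) (h : {linear A -> B}).

Definition range_submod : submod B := Submod (is_submodule_range h).
Definition kernel_submod : submod A :=
  Submod (is_submodule_preimage h (is_submodule0 B)).

Definition corange (a : A) : subm range_submod :=
  subm_of range_submod (ex_intro _ a erefl).

Lemma corange_linearP r u v : corange (r *: u + v) = r *: corange u + corange v.
Proof. by apply: val_inj; rewrite /= linearP. Qed.

Definition corangeL : {linear A -> subm range_submod} := mkLinear corange_linearP.

Lemma corange_surj (t : subm range_submod) : exists a, corange a = t.
Proof. by have [a eq_a] := subm_in t; exists a; apply: val_inj. Qed.

End Submodules.

Section StablePart.
Variables (R : pzRingType) (A X : lmodType R) (f : {linear X -> (A * X)%type}).

Lemma iter_linearP (h : {linear X -> X}) n r u v :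
  iter n h (r *: u + v) = r *: iter n h u + iter n h v.
Proof. by elim: n => //= n ->; rewrite linearP. Qed.

(* The largest submodule [W] of [X] with [f W <= C (+) W]. *)
Definition stable_part (C : A -> Prop) (x : X) : Prop :=
  forall n, C (f (iter n (snd \o f) x)).1.

Lemma is_submodule_stable_part C : is_submodule C -> is_submodule (stable_part C).
Proof.
move=> HC; pose h n : {linear X -> A} := fst \o f \o mkLinear (iter_linearP (snd \o f) n).
exact: is_submodule_bigcap (fun n => is_submodule_preimage (h n) HC).
Qed.

Lemma stable_part_snd C x : stable_part C x -> stable_part C (f x).2.
Proof. by move=> Cx n; have := Cx n.+1; rewrite iterSr. Qed.

Lemma stable_partI C x : C (f x).1 -> stable_part C (f x).2 -> stable_part C x.
Proof. by move=> Cx1 Cx2 [|n] //; rewrite iterSr; apply: Cx2. Qed.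

Lemma stable_part_mono (C D : A -> Prop) x :
  (forall a, C a -> D a) -> stable_part C x -> stable_part D x.
Proof. by move=> CD Cx n; apply: CD. Qed.

Variables (A' : lmodType R) (e : {linear A' -> A}) (C : A -> Prop).
Hypotheses (e_inj : injective e) (C_range : forall a, C a <-> exists b, e b = a).

Let C_submodule : is_submodule C.
Proof.
have -> : C = fun a => exists b, e b = a by apply/funext => a; apply/propext.
exact: is_submodule_range.
Qed.

Definition stable_submod : submod X := Submod (is_submodule_stable_part C_submodule).
Local Notation W := (subm stable_submod).

Definition preimage (a : A) : A' := epsilon (inhabits 0) (fun b => e b = a).

Lemma preimageK a : C a -> e (preimage a) = a.
Proof. by move/C_range; apply: epsilon_spec. Qed.

Lemma stable_submod_fst (w : W) : C (f (val w)).1.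
Proof. exact: (subm_in w 0). Qed.

Definition restrict (w : W) : (A' * W)%type :=
  (preimage (f (val w)).1, subm_of stable_submod (stable_part_snd (subm_in w))).

Lemma restrict_linearP r u v : restrict (r *: u + v) = r *: restrict u + restrict v.
Proof.
congr pair; last by apply: val_inj; rewrite /= linearP.
apply: e_inj; rewrite /= linearP !preimageK; first by rewrite linearP.
- exact: stable_submod_fst v.
- exact: stable_submod_fst u.
- exact: stable_submod_fst (r *: u + v).
Qed.

Definition restrictL : {linear W -> (A' * W)%type} := mkLinear restrict_linearP.

Definition inclusion (s : (A' * W)%type) : (A * X)%type := (e s.1, val s.2).

Lemma inclusion_linearP r u v : inclusion (r *: u + v) = r *: inclusion u + inclusion v.
Proof. by rewrite /inclusion /= linearP. Qed.

Definition inclusionL : {linear (A' * W)%type -> (A * X)%type} :=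
  mkLinear inclusion_linearP.

Lemma inclusion_inj : injective inclusion.
Proof. by move=> [b w] [b' w'] [/e_inj -> /val_inj ->]. Qed.

Lemma inclusion_restrict w : inclusion (restrict w) = f (val w).
Proof.
by rewrite /inclusion /= preimageK; [case: (f _) | exact: stable_submod_fst].
Qed.

Lemma stable_part_inclusion s x : inclusion s = f x -> stable_part C x.
Proof.
case: s => b w /= eq_f; apply: stable_partI.
  by apply/C_range; exists b; rewrite -eq_f.
by rewrite -eq_f; exact: subm_in w.
Qed.

Lemma restrict_kernel (B : lmodType R) (g : {linear (A * X)%type -> B}) :
  (forall s, g s = 0 <-> exists x, s = f x) ->
  forall s, g (inclusion s) = 0 <-> exists w, s = restrict w.
Proof.
move=> g_ker s; rewrite g_ker; split=> [[x eq_x]|[w ->]].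
  exists (subm_of stable_submod (stable_part_inclusion eq_x)).
  by apply: inclusion_inj; rewrite inclusion_restrict.
by exists (val w); rewrite inclusion_restrict.
Qed.

Lemma restrict_inj : injective f -> injective restrict.
Proof.
by move=> f_inj w w' /(congr1 inclusion); rewrite !inclusion_restrict => /f_inj /val_inj.
Qed.

End StablePart.

Section Degeneration.
Variable R : pzRingType.

Lemma deg_le_range (A X B : lmodType R) (F : {linear X -> (A * X)%type})
  (h : {linear (A * X)%type -> B}) :
  finite_length X -> injective F -> (forall s, h s = 0 <-> exists x, s = F x) ->
  deg_le A (subm (range_submod h)).
Proof.
move=> FX F_inj h_ker; exists X; split=> //; exists F, (corangeL h); split=> //; split.
  by move=> t; have [s <-] := corange_surj t; exists s.
by move=> s; rewrite -h_ker; split=> [/(congr1 val) //|hs]; apply: val_inj.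
Qed.

Lemma deg_le_sub (M N M' : lmodType R) (i : {linear M' -> M}) :
  injective i -> deg_le M N -> exists N' : lmodType R, submodule_of N' N /\ deg_le M' N'.
Proof.
move=> i_inj [X [FX [f [g [f_inj [_ g_ker]]]]]].
have i_range a : (exists b, i b = a) <-> exists b, i b = a by [].
exists (subm (range_submod (g \o inclusionL f i_range))); split.
  exact: submodule_of_subm.
apply: (deg_le_range (F := restrictL f i_inj i_range)).
- exact: finite_length_subm.
- exact: restrict_inj.
- exact: restrict_kernel.
Qed.

(* With [K] the kernel of [A (+) X ->> I ->> V], the sequence
   [0 -> X (+) K -> A (+) X (+) K -> V (+) ker p -> 0] is exact. *)
Lemma deg_le_extension (A I V : lmodType R) (p : {linear I -> V}) :
  finite_length A -> (forall v, exists t, p t = v) -> deg_le A I ->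
  deg_le A (V * subm (kernel_submod p))%type.
Proof.
move=> FA p_surj [X [FX [f [g [f_inj [g_surj g_ker]]]]]].
pose K := kernel_submod (p \o g).
have K_f x : K (f x) by rewrite /= (g_ker _).2 ?linear0 //; exists x.
have kernel_g (k : subm K) : kernel_submod p (g (val k)) := subm_in k.
pose F (xk : (X * subm K)%type) : (A * (X * subm K))%type :=
  ((val xk.2).1, ((val xk.2).2, subm_of K (K_f xk.1))).
pose G (s : (A * (X * subm K))%type) : (V * subm (kernel_submod p))%type :=
  (p (g (s.1, s.2.1)), subm_of _ (kernel_g s.2.2)).
have F_linearP r u v : F (r *: u + v) = r *: F u + F v.
  by congr (_, (_, _)); apply: val_inj; exact: linearP.
have G_linearP r u v : G (r *: u + v) = r *: G u + G v.
  by congr (_, _); [rewrite /= -!linearP | apply: val_inj; exact: linearP].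
exists (X * subm K)%type; split.
  by apply: finite_length_prod; [|apply/finite_length_subm/finite_length_prod].
exists (mkLinear F_linearP), (mkLinear G_linearP); split; [|split].
- move=> [x k] [x' k'] [eq1 eq2 /f_inj ->].
  by congr pair; apply: val_inj; rewrite [val k]surjective_pairing [val k']surjective_pairing eq1 eq2.
- move=> [v u]; have [t <-] := p_surj v; have [s gs] := g_surj t.
  have [s' gs'] := g_surj (val u).
  have Ks' : K s' by rewrite /= gs'; apply: subm_in u.
  exists (s.1, (s.2, subm_of K Ks')); congr pair; first by rewrite /= -surjective_pairing gs.
  exact: val_inj.
- move=> [a [x k]]; split=> [[Kax gk0]|[[x0 k0] ->]].
    have [x0 eq_k] := (g_ker _).1 gk0.
    exists (x0, subm_of K Kax); congr (_, (_, _)); exact: val_inj.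
  congr pair; first by rewrite /= -surjective_pairing; apply: subm_in k0.
  by apply: val_inj; rewrite /= (g_ker _).2 //; exists x0.
Qed.

End Degeneration.

Section VirtualDegeneration.
Variables (R : pzRingType) (M N M' Y X : lmodType R) (i : {linear M' -> M}).
Variables (f : {linear X -> ((Y * M) * X)%type}) (g : {linear ((Y * M) * X)%type -> (Y * N)%type}).

Definition sum_sub (P : Y -> Prop) (a : (Y * M)%type) : Prop := P a.1 /\ exists m, i m = a.2.

Definition top_image (P : Y -> Prop) (y : Y) : Prop :=
  exists2 s, sum_sub P s.1 /\ stable_part f (sum_sub P) s.2 & (fst \o g) s = y.

Lemma is_submodule_sum_sub P : is_submodule P -> is_submodule (sum_sub P).
Proof. by move=> HP; apply: is_submodule_prod HP (is_submodule_range i). Qed.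

Lemma is_submodule_top_image P : is_submodule P -> is_submodule (top_image P).
Proof.
move=> /is_submodule_sum_sub HC.
exact: is_submodule_image (is_submodule_prod HC (is_submodule_stable_part f HC)).
Qed.

Lemma top_image_mono (P Q : Y -> Prop) :
  (forall y, P y -> Q y) -> forall y, top_image P y -> top_image Q y.
Proof.
move=> PQ y [s [[Ps Ms] Ws] eq_y]; exists s => //; split; first by split=> //; apply: PQ.
by apply: stable_part_mono Ws => a [Pa Ma]; split=> //; apply: PQ.
Qed.

Variables (P : Y -> Prop) (HP : is_submodule P) (P_fix : forall y, top_image P y <-> P y).
Hypothesis i_inj : injective i.

Local Notation Z := (subm (Submod HP)).

Definition embed_sum (s : (Z * M')%type) : (Y * M)%type := (val s.1, i s.2).

Lemma embed_sum_linearP r u v : embed_sum (r *: u + v) = r *: embed_sum u + embed_sum v.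
Proof. by rewrite /embed_sum /= linearP. Qed.

Definition embed_sumL : {linear (Z * M')%type -> (Y * M)%type} := mkLinear embed_sum_linearP.

Lemma embed_sum_inj : injective embed_sumL.
Proof. by move=> [z m] [z' m'] [/val_inj -> /i_inj ->]. Qed.

Lemma embed_sum_range a : sum_sub P a <-> exists b, embed_sumL b = a.
Proof.
case: a => y m; split=> [[/= Py [m' <-]]|[[z m'] [<- <-]]]; last by split; [exact: (subm_in z)|exists m'].
by exists (subm_of (Submod HP) Py, m').
Qed.

Local Notation image := (subm (range_submod (g \o inclusionL f embed_sum_range))).

Lemma image_fst_in (t : image) : P (val t).1.
Proof.
have [[b w] <-] := subm_in t; apply/P_fix.
exists (inclusion (b, w)) => //; split.
  by apply/embed_sum_range; exists b.
exact: (subm_in w).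
Qed.

Definition image_proj (t : image) : Z := subm_of (Submod HP) (image_fst_in t).

Lemma image_proj_linearP r u v :
  image_proj (r *: u + v) = r *: image_proj u + image_proj v.
Proof. by apply: val_inj; rewrite [val (_ + _)]linearP. Qed.

Definition image_projL : {linear image -> Z} := mkLinear image_proj_linearP.

Lemma image_proj_surj z : exists t, image_projL t = z.
Proof.
have [s [/embed_sum_range[b eq_b] Ws] eq_z] := (P_fix (val z)).2 (subm_in z).
exists (corange _ (b, subm_of (stable_submod f embed_sum_range) Ws)).
by apply: val_inj; rewrite /= -eq_z /inclusion eq_b [s in RHS]surjective_pairing.
Qed.

Lemma submodule_of_kernel_image_proj : submodule_of (subm (kernel_submod image_projL)) N.
Proof.
have proj_fst (u : subm (kernel_submod image_projL)) : (val (val u)).1 = 0.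
  have ku : image_projL (val u) = 0 := subm_in u.
  by have /= := congr1 val ku.
exists (snd \o val \o val) => u u' /= eq2; apply/val_inj/val_inj.
by rewrite [LHS]surjective_pairing [RHS]surjective_pairing !proj_fst eq2.
Qed.

Lemma vdeg_le_kernel_image_proj :
  finite_length Y -> finite_length M -> finite_length X -> injective f ->
  (forall s, g s = 0 <-> exists x, s = f x) ->
  vdeg_le M' (subm (kernel_submod image_projL)).
Proof.
move=> FY FM FX f_inj g_ker.
have FZ : finite_length Z by apply: finite_length_subm.
exists Z; split=> //; apply: deg_le_extension image_proj_surj _.
  by apply: finite_length_prod => //; apply: finite_length_inj i_inj FM.
apply: (deg_le_range (F := restrictL f embed_sum_inj embed_sum_range)).
- exact: finite_length_subm.
- exact: restrict_inj.
- exact: (restrict_kernel embed_sum_inj g_ker).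
Qed.

End VirtualDegeneration.

Lemma vdeg_le_sub (R : pzRingType) (M N M' : lmodType R) (i : {linear M' -> M}) :
  injective i -> finite_length M -> vdeg_le M N ->
  exists N' : lmodType R, submodule_of N' N /\ vdeg_le M' N'.
Proof.
move=> i_inj FM [Y [FY [X [FX [f [g [f_inj [_ g_ker]]]]]]]].
have [P HP P_fix] := submodule_fixpoint FY (is_submodule_top_image i f g)
  (@top_image_mono _ _ _ _ _ _ i f g).
exists (subm (kernel_submod (image_projL HP P_fix))); split.
  exact: submodule_of_kernel_image_proj.
exact: vdeg_le_kernel_image_proj.
Qed.

Unset Implicit Arguments.
Theorem theorem1p5 (k : comPzRingType) (L : algType k) (M N M' : lmodType L)
  (i : {linear M' -> M}) :
  artin_algebra L -> finite_length M -> finite_length N -> injective i ->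
  (deg_le M N -> exists N' : lmodType L, submodule_of N' N /\ deg_le M' N') /\
  (vdeg_le M N -> exists N' : lmodType L, submodule_of N' N /\ vdeg_le M' N').
Proof.
move=> _ FM _ i_inj; split; [exact: deg_le_sub i_inj | exact: vdeg_le_sub i_inj FM].
Qed.
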